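(* Let $\mathcal{O}$ be a nonempty set of quantum channels on $n$ qubits that is closed under composition (if $\Phi,\Phi'\in\mathcal{O}$ then $\Phi\circ\Phi'\in\mathcal{O}$), let $\Psi$ be a quantum channel on $n$ qubits with $\gamma(\Psi)<\infty$, and let $k\ge 0$ be an integer. Then for every sample $S=(z_1,\ldots,z_m)$ with $z_i\in\mathbb{F}_2^n\times\mathbb{F}_2^n$, \[ \hat{R}_S(\mathcal{F}(\mathcal{O}^{(k)}_\Psi))\le \gamma^*\,\hat{R}_S(\mathcal{F}(\mathcal{O})),\qquad \gamma^*=\min\{1+2\gamma_{\max,n},\,(1+2\gamma(\Psi))^k\}, \] and for every probability distribution $D$ on $\mathbb{F}_2^n\times\mathbb{F}_2^n$, $R_D(\mathcal{F}(\mathcal{O}^{(k)}_\Psi))\le\gamma^* R_D(\mathcal{F}(\mathcal{O}))$. (If $\gamma_{\max,n}=\infty$, $\gamma^*$ is $(1+2\gamma(\Psi))^k$.)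
   Context: A quantum channel on $n$ qubits is a completely positive trace-preserving linear map on $2^n\times 2^n$ complex matrices. For a channel (or linear map) $\Phi$, $f_\Phi(x,y)=\mathrm{Tr}[\Phi(|x\rangle\langle x|)\,|y\rangle\langle y|]$ for $x,y\in\mathbb{F}_2^n$; for a set $\Omega$ of channels, $\mathcal{F}(\Omega)=\{f_\Phi:\Phi\in\Omega\}$. Empirical Rademacher complexity: $\hat{R}_S(\mathcal{G})=\mathbb{E}_{\epsilon}[\sup_{g\in\mathcal{G}}\frac1m\sum_{i=1}^m\epsilon_i g(z_i)]$ with $\epsilon_i$ i.i.d. uniform on $\{\pm1\}$; $R_D(\mathcal{G})=\mathbb{E}_{S\sim D^m}\hat{R}_S(\mathcal{G})$. $\mathrm{Conv}(\mathcal{O})$ is the convex hull. Free robustness w.r.t. $\mathcal{O}$: $\gamma(\Phi)=\inf\{\lambda\ge0:\exists\,\Phi'\in\mathrm{Conv}(\mathcal{O}),\ (\Phi+\lambda\Phi')/(1+\lambda)\in\mathrm{Conv}(\mathcal{O})\}$. $\gamma_{\max,n}=\sup\{\gamma(\Phi):\Phi\text{ a channel on }n\text{ qubits}\}$. $\mathcal{O}_\Psi=\mathcal{O}\cup\{\Psi\}$, and $\mathcal{O}^{(k)}_\Psi$ is the set of all finite compositions $\Phi_l\circ\cdots\circ\Phi_1$ ($l\ge1$) with each $\Phi_i\in\mathcal{O}_\Psi$ and at most $k$ of the $\Phi_i$ equal to $\Psi$. *)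

From mathcomp Require Import all_boot all_order all_algebra.
From mathcomp Require Import all_classical all_reals.
From mathcomp Require Import ereal complex.
Set Implicit Arguments. Unset Strict Implicit. Unset Printing Implicit Defensive.
Import Order.TTheory GRing.Theory Num.Theory.
Local Open Scope ring_scope.
Local Open Scope classical_set_scope.

Notation Bits n := 'I_(2 ^ n).

Section QChannels.
Variable R : realType.
Local Notation C := R[i].

(* n-qubit operators: 2^n x 2^n complex matrices.  The computational basis
   state |x>, x in F_2^n, is labelled by its binary value in 'I_(2^n). *)
Definition Mat (n : nat) := 'M[C]_(2 ^ n).
Definition LinMap (n : nat) := Mat n -> Mat n.

Definition adjv N (v : 'cV[C]_N) : 'rV[C]_N := map_mx Num.conj v^T.

(* a p x p block matrix with N x N blocks (an element of M_p (M_N)) is PSD *)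
Definition block_psd N p (X : 'I_p -> 'I_p -> 'M[C]_N) : Prop :=
  forall v : 'I_p -> 'cV[C]_N,
    0 <= \sum_(i < p) \sum_(j < p) (adjv (v i) *m X i j *m v j) 0 0.

Definition is_linear_map n (Phi : LinMap n) : Prop :=
  forall (a : C) (X Y : Mat n), Phi (a *: X + Y) = a *: Phi X + Phi Y.

(* complete positivity: id_p (x) Phi is positive for every p *)
Definition completely_positive n (Phi : LinMap n) : Prop :=
  forall (p : nat) (X : 'I_p -> 'I_p -> Mat n),
    block_psd X -> block_psd (fun i j => Phi (X i j)).

Definition trace_preserving n (Phi : LinMap n) : Prop :=
  forall X : Mat n, \tr (Phi X) = \tr X.

Definition is_channel n (Phi : LinMap n) : Prop :=
  [/\ is_linear_map Phi, completely_positive Phi & trace_preserving Phi].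

Definition ketbra n (x : Bits n) : Mat n := delta_mx x x.

(* f_Phi(x,y) = Tr[Phi(|x><x|) |y><y|]  (real part; it is real for channels) *)
Definition fPhi n (Phi : LinMap n) (z : Bits n * Bits n) : R :=
  complex.Re (\tr (Phi (ketbra z.1) *m ketbra z.2)).

Definition Fset n (Omega : set (LinMap n)) : set (Bits n * Bits n -> R) :=
  [set fPhi Phi | Phi in Omega].

Definition rsign (b : bool) : R := if b then 1 else -1.

Definition emp_rademacher (T : Type) (m : nat) (S : 'I_m -> T) (G : set (T -> R))
  : \bar R :=
  (\sum_(eps : {ffun 'I_m -> bool})
     ((2 ^ m)%:R^-1)%:E *
     ereal_sup [set ((m%:R)^-1 * \sum_(i < m) rsign (eps i) * g (S i))%:E
               | g in G])%E.

Definition is_distribution (T : finType) (D : T -> R) : Prop :=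
  (forall t, 0 <= D t) /\ \sum_t D t = 1.

Definition rademacher (T : finType) (D : T -> R) (m : nat) (G : set (T -> R))
  : \bar R :=
  (\sum_(S : {ffun 'I_m -> T}) (\prod_(i < m) D (S i))%:E * emp_rademacher S G)%E.

Definition conv n (O : set (LinMap n)) : set (LinMap n) :=
  [set Phi | exists (l : nat) (c : 'I_l -> R) (Ph : 'I_l -> LinMap n),
     [/\ forall i, 0 <= c i, \sum_i c i = 1, forall i, O (Ph i) &
         Phi = fun X => \sum_i ((c i)%:C)%C *: Ph i X]].

Definition robustness n (O : set (LinMap n)) (Phi : LinMap n) : \bar R :=
  ereal_inf [set lam%:E | lam in
    [set lam : R | 0 <= lam /\ exists2 Phi', conv O Phi' &
       conv O (fun X => ((1 + lam)^-1)%:C%C *: (Phi X + (lam%:C)%C *: Phi' X))]].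

Definition gamma_max n (O : set (LinMap n)) : \bar R :=
  ereal_sup [set robustness O Phi | Phi in [set Phi | is_channel Phi]].

(* composition Phi_l o ... o Phi_1 of the list [:: Phi_l; ...; Phi_1] *)
Definition compose_list n (s : seq (LinMap n)) : LinMap n :=
  foldr (fun f g => f \o g) id s.

Definition Ok n (O : set (LinMap n)) (Psi : LinMap n) (k : nat)
  : set (LinMap n) :=
  [set Phi | exists s : seq (LinMap n),
     [/\ (0 < size s)%N,
         all (fun f => `[< O f \/ f = Psi >]) s,
         (count (fun f => `[< f = Psi >]) s <= k)%N &
         Phi = compose_list s]].

Definition gamma_star n (O : set (LinMap n)) (Psi : LinMap n) (k : nat)
  : \bar R :=
  Order.min (1 + 2 * gamma_max O)%E (((1 + 2 * fine (robustness O Psi)) ^+ k)%:E).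

End QChannels.

From mathcomp Require Import all_boot all_order all_algebra.
From mathcomp Require Import all_classical all_reals.
From mathcomp Require Import ereal complex.
From mathcomp Require Import lra ring.
Set Implicit Arguments. Unset Strict Implicit. Unset Printing Implicit Defensive.
Import Order.TTheory GRing.Theory Num.Theory.
Local Open Scope ring_scope.
Local Open Scope classical_set_scope.

(* A map Phi "decomposes over O with norm b" if Phi = sum_i c_i Phi_i with
   free maps Phi_i in O, sum_i c_i = 1 and sum_i |c_i| <= b.  The proof has
   three layers.
   - Decompositions: free robustness below x gives a decomposition of norm
     1 + 2x (from Phi = (1 + lam) Phi'' - lam Phi'), and decompositions
     multiply under composition, so a circuit with at most k uses of a gate
     of norm b decomposes with norm b^k.
   - Key estimate: if every map of Q decomposes with norm b, then
     R_S(F(Q)) <= b R_S(F(O)).  For a sign vector eps, splitting each c_i into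
     positive and negative parts bounds the correlation of sum_i c_i Phi_i by
     ((b + 1) sup(eps) + (b - 1) sup(-eps)) / 2, where sup(eps) is the best
     correlation of a free map; averaging over eps and using eps <-> -eps
     symmetry gives b R_S(F(O)).
   - Main theorem: applied with b close to (1 + 2 gamma(Psi))^k, or to
     1 + 2 gamma_max since every circuit is a channel; a limiting argument
     removes the slack, and the expectation over samples preserves the bound. *)

Section Channels.
Context {R : realType} {n : nat}.
Local Notation LM := (LinMap R n).
Implicit Types (Phi Psi : LM) (X Y : Mat R n).

Lemma linear_map0 Phi : is_linear_map Phi -> Phi 0 = 0.
Proof.
move=> linPhi; have := linPhi 1 0 0; rewrite !scale1r addr0 -{1}[Phi 0]addr0.
by move/addrI/esym.
Qed.

Lemma linear_mapD Phi X Y : is_linear_map Phi -> Phi (X + Y) = Phi X + Phi Y.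
Proof. by move=> linPhi; have := linPhi 1 X Y; rewrite !scale1r. Qed.

Lemma linear_mapZ Phi a X : is_linear_map Phi -> Phi (a *: X) = a *: Phi X.
Proof. by move=> linPhi; rewrite -[a *: X]addr0 linPhi linear_map0 // addr0. Qed.

Lemma linear_map_sum Phi (I : Type) (s : seq I) (F : I -> Mat R n) :
  is_linear_map Phi -> Phi (\sum_(i <- s) F i) = \sum_(i <- s) Phi (F i).
Proof.
move=> linPhi; elim: s => [|i s IH]; first by rewrite !big_nil linear_map0.
by rewrite !big_cons linear_mapD // IH.
Qed.

Lemma channel_comp Phi Psi :
  is_channel Phi -> is_channel Psi -> is_channel (Phi \o Psi).
Proof.
case=> linPhi cpPhi tpPhi [linPsi cpPsi tpPsi]; split.
- by move=> a X Y /=; rewrite linPsi linPhi.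
- by move=> p X psdX; apply: (cpPhi p (fun i j => Psi (X i j))); apply: cpPsi.
- by move=> X /=; rewrite tpPhi tpPsi.
Qed.

Lemma channel_compose_list (s : seq LM) :
  all (fun f => `[< is_channel f >]) s -> is_channel (compose_list s).
Proof.
elim: s => [_|f s IH /= /andP[/asboolP chf /IH chs]]; last exact: channel_comp.
by split.
Qed.

Lemma Ok_channel (O : set LM) Psi k Phi :
  (forall Phi, O Phi -> is_channel Phi) -> is_channel Psi ->
  Ok O Psi k Phi -> is_channel Phi.
Proof.
move=> chO chPsi [s [_ /allP sOPsi _ ->]]; apply: channel_compose_list.
by apply/allP => f /sOPsi /asboolP chf; apply/asboolP; case: chf => [/chO|->].
Qed.

End Channels.

Section Transitions.
Context {R : realType} {n : nat}.
Local Notation C := R[i].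
Implicit Types (Phi : LinMap R n) (M : Mat R n) (x y : Bits n).

Lemma quad_formE N (w : 'cV[C]_N) (M : 'M[C]_N) :
  (adjv w *m M *m w) 0 0 = \sum_j \sum_i (w i 0)^* * M i j * w j 0.
Proof.
rewrite mxE; apply: eq_bigr => j _; rewrite mxE mulr_suml.
by apply: eq_bigr => i _; rewrite !mxE.
Qed.

Lemma quad_form_ketbra (w : 'cV[C]_(2 ^ n)) x :
  (adjv w *m ketbra R x *m w) 0 0 = (w x 0)^* * w x 0.
Proof.
rewrite quad_formE (bigD1 x) //= [X in _ + X]big1 => [|j /negbTE jx]; last first.
  by rewrite big1 // => i _; rewrite !mxE jx andbF mulr0 mul0r.
rewrite addr0 (bigD1 x) //= [X in _ + X]big1 => [|i /negbTE ix]; last first.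
  by rewrite !mxE ix mulr0 mul0r.
by rewrite !mxE !eqxx mulr1 addr0.
Qed.

Lemma ketbra_psd x : block_psd (fun (_ _ : 'I_1) => ketbra R x).
Proof. by move=> v; rewrite !big_ord1 quad_form_ketbra mulrC mul_conjC_ge0. Qed.

Lemma trace_mul_ketbra M y : \tr (M *m ketbra R y) = M y y.
Proof.
rewrite /mxtrace (bigD1 y) //= [X in _ + X]big1 => [|i /negbTE iy]; last first.
  by rewrite mxE big1 // => j _; rewrite !mxE; case: (j == y); rewrite ?iy mulr0.
rewrite addr0 mxE (bigD1 y) //= [X in _ + X]big1 => [|j /negbTE jy]; last first.
  by rewrite !mxE jy mulr0.
by rewrite !mxE !eqxx mulr1 addr0.
Qed.

Lemma quad_form_delta N (M : 'M[C]_N) (y : 'I_N) :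
  (adjv (delta_mx y 0 : 'cV[C]_N) *m M *m (delta_mx y 0 : 'cV[C]_N)) 0 0 = M y y.
Proof.
rewrite quad_formE (bigD1 y) //= [X in _ + X]big1 => [|j /negbTE jy]; last first.
  by rewrite big1 // => i _; rewrite !mxE jy mulr0.
rewrite addr0 (bigD1 y) //= [X in _ + X]big1 => [|i /negbTE iy]; last first.
  by rewrite !mxE iy conjC0 !mul0r.
by rewrite !mxE !eqxx conjC1 mulr1 mul1r addr0.
Qed.

Lemma channel_diag_ge0 Phi x y : is_channel Phi -> 0 <= Phi (ketbra R x) y y.
Proof.
case=> _ cpPhi _; have := cpPhi 1%N _ (ketbra_psd x) (fun _ => delta_mx y 0).
by rewrite !big_ord1 quad_form_delta.
Qed.

(* Transition probabilities of a channel lie in [0, 1]: the diagonal of the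
   output state is nonnegative and sums to the trace 1. *)
Lemma fPhi_bound Phi z : is_channel Phi -> 0 <= fPhi Phi z <= 1.
Proof.
move=> chPhi; rewrite /fPhi trace_mul_ketbra.
have diag_ge0 y : 0 <= complex.Re (Phi (ketbra R z.1) y y).
  by have := channel_diag_ge0 z.1 y chPhi; rewrite lecE => /andP[].
have diag_sum : \sum_y complex.Re (Phi (ketbra R z.1) y y) = 1.
  case: chPhi => _ _ tpPhi; rewrite -raddf_sum.
  change (complex.Re (\tr (Phi (ketbra R z.1))) = 1).
  by rewrite tpPhi -[ketbra R z.1]mul1mx trace_mul_ketbra mxE eqxx.
rewrite diag_ge0 -diag_sum (bigD1 z.2) //= lerDl.
by apply: sumr_ge0 => i _; exact: diag_ge0.
Qed.

End Transitions.

Section Decompositions.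
Context {R : realType} {n : nat}.
Local Notation LM := (LinMap R n).
Implicit Types (O : set LM) (Phi Psi : LM) (s t : seq (R * LM)).

(* A quasi-probability decomposition: a finite list of pairs (c_i, Phi_i)
   standing for the real linear combination sum_i c_i Phi_i. *)
Definition qsum s : LM := fun X => \sum_(p <- s) (p.1)%:C%C *: p.2 X.

Definition qweight s : R := \sum_(p <- s) p.1.
Definition qnorm s : R := \sum_(p <- s) `|p.1|.

Definition qover O s : bool := all (fun p => `[< O p.2 >]) s.

Definition decomposes O (b : R) Phi : Prop :=
  exists s, [/\ qover O s, Phi = qsum s, qweight s = 1 & qnorm s <= b].

Definition qscale (a : R) s := [seq (a * p.1, p.2) | p <- s].
Definition qprod s t := [seq (p.1 * q.1, p.2 \o q.2) | p <- s, q <- t].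

Lemma qnorm_ge0 s : 0 <= qnorm s.
Proof. exact: sumr_ge0. Qed.

Lemma qsum_cat s t X : qsum (s ++ t) X = qsum s X + qsum t X.
Proof. by rewrite /qsum big_cat. Qed.

Lemma qweight_cat s t : qweight (s ++ t) = qweight s + qweight t.
Proof. by rewrite /qweight big_cat. Qed.

Lemma qnorm_cat s t : qnorm (s ++ t) = qnorm s + qnorm t.
Proof. by rewrite /qnorm big_cat. Qed.

Lemma qsum_scale a s X : qsum (qscale a s) X = (a%:C)%C *: qsum s X.
Proof.
rewrite /qsum big_map scaler_sumr.
by apply: eq_bigr => p _; rewrite /= rmorphM scalerA.
Qed.

Lemma qweight_scale a s : qweight (qscale a s) = a * qweight s.
Proof. by rewrite /qweight big_map mulr_sumr. Qed.

Lemma qnorm_scale a s : qnorm (qscale a s) = `|a| * qnorm s.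
Proof.
by rewrite /qnorm big_map mulr_sumr; apply: eq_bigr => p _; rewrite normrM.
Qed.

Lemma qsum_prod O s t : (forall Phi, O Phi -> is_linear_map Phi) ->
  qover O s -> qsum (qprod s t) = qsum s \o qsum t.
Proof.
move=> linO /allP sO; apply: funext => X; rewrite /qsum big_allpairs_dep /=.
apply: eq_big_seq => p /sO /asboolP /linO linp.
rewrite linear_map_sum // scaler_sumr; apply: eq_bigr => q _.
by rewrite linear_mapZ // scalerA rmorphM.
Qed.

Lemma qweight_prod s t : qweight (qprod s t) = qweight s * qweight t.
Proof. by rewrite /qweight big_allpairs_dep big_distrlr. Qed.

Lemma qnorm_prod s t : qnorm (qprod s t) = qnorm s * qnorm t.
Proof.
rewrite /qnorm big_allpairs_dep big_distrlr.
by apply: eq_bigr => p _; apply: eq_bigr => q _; rewrite normrM.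
Qed.

Lemma qover_prod O s t : (forall Phi Psi, O Phi -> O Psi -> O (Phi \o Psi)) ->
  qover O s -> qover O t -> qover O (qprod s t).
Proof.
move=> compO sO /allP tO; rewrite /qover /qprod; elim: s sO => //= p s IH.
case/andP=> /asboolP pO sO; rewrite all_cat IH // andbT all_map.
by apply/allP => q /tO /asboolP qO; apply/asboolP; exact: compO.
Qed.

Lemma decomposes_free O Phi : O Phi -> decomposes O 1 Phi.
Proof.
move=> PhiO; exists [:: (1, Phi)]; split.
- by rewrite /qover /= andbT; apply/asboolP.
- by apply: funext => X; rewrite /qsum big_seq1 /= scale1r.
- by rewrite /qweight big_seq1.
- by rewrite /qnorm big_seq1 normr1.
Qed.

Lemma decomposes_le O b b' Phi :
  b <= b' -> decomposes O b Phi -> decomposes O b' Phi.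
Proof. by move=> bb' [s [sO -> sw sn]]; exists s; split=> //; exact: le_trans bb'. Qed.

Lemma decomposes_comp O b b' Phi Psi :
  (forall Phi, O Phi -> is_linear_map Phi) ->
  (forall Phi Psi, O Phi -> O Psi -> O (Phi \o Psi)) ->
  decomposes O b Phi -> decomposes O b' Psi -> decomposes O (b * b') (Phi \o Psi).
Proof.
move=> linO compO [s [sO -> sw sn]] [t [tO -> tw tn]]; exists (qprod s t); split.
- exact: qover_prod.
- by rewrite (qsum_prod t linO sO).
- by rewrite qweight_prod sw tw mulr1.
- by rewrite qnorm_prod ler_pM ?qnorm_ge0.
Qed.

Lemma conv_decomposes O Phi : conv O Phi -> decomposes O 1 Phi.
Proof.
case=> l [c [Ph [c_ge0 c_sum PhO ->]]].
exists [seq (c i, Ph i) | i <- index_enum 'I_l]; split.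
- by rewrite /qover all_map; apply/allP => i _ /=; apply/asboolP.
- by apply: funext => X; rewrite /qsum big_map.
- by rewrite /qweight big_map.
- rewrite /qnorm big_map -c_sum; apply: ler_sum => i _ /=.
  by rewrite ger0_norm.
Qed.

(* If (Phi + lam Phi') / (1 + lam) and Phi' are free mixtures, then
   Phi = (1 + lam) * mixture - lam * Phi' has l1-norm at most 1 + 2 lam. *)
Lemma decomposes_robust O Phi Phi' lam : 0 <= lam -> conv O Phi' ->
  conv O (fun X => ((1 + lam)^-1)%:C%C *: (Phi X + (lam%:C)%C *: Phi' X)) ->
  decomposes O (1 + 2 * lam) Phi.
Proof.
move=> lam_ge0 /conv_decomposes [t [tO tE tw tn]].
move=> /conv_decomposes [u [uO uE uw un]].
exists (qscale (1 + lam) u ++ qscale (- lam) t); split.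
- by rewrite /qover all_cat !all_map; apply/andP.
- apply: funext => X; rewrite qsum_cat !qsum_scale.
  rewrite -uE -tE scalerA -rmorphM mulfV ?scale1r; last by rewrite gt_eqF ?ltr_wpDr.
  by rewrite rmorphN scaleNr /= addrK.
- by rewrite qweight_cat !qweight_scale uw tw; lra.
- rewrite qnorm_cat !qnorm_scale normrN !ger0_norm //; last lra.
  by rewrite mulr_natl; nra.
Qed.

Lemma fPhi_qsum s z : fPhi (qsum s) z = \sum_(p <- s) p.1 * fPhi p.2 z.
Proof.
rewrite /fPhi /qsum mulmx_suml [\tr _]raddf_sum raddf_sum.
apply: eq_bigr => p _; rewrite -scalemxAl /= mxtraceZ.
by case: (\tr _) => a b /=; rewrite mul0r oppr0 addr0.
Qed.

Lemma robustness_ge0 O Phi : (0 <= robustness O Phi)%E.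
Proof. by apply/ereal_infP => _ [lam [lam_ge0 _] <-]; rewrite lee_fin. Qed.

Lemma robustness_decomposes O Phi (x : R) :
  (robustness O Phi < x%:E)%E -> decomposes O (1 + 2 * x) Phi.
Proof.
case/ereal_inf_lt=> _ [lam [lam_ge0 [Phi' Phi'O mixO]] <-]; rewrite lte_fin => lam_x.
by apply: decomposes_le (decomposes_robust lam_ge0 Phi'O mixO); lra.
Qed.

End Decompositions.

Section Circuits.
Context {R : realType} {n : nat}.
Local Notation LM := (LinMap R n).
Variables (O : set LM) (Psi : LM) (b : R).
Hypothesis linO : forall Phi, O Phi -> is_linear_map Phi.
Hypothesis compO : forall Phi Phi', O Phi -> O Phi' -> O (Phi \o Phi').
Hypothesis b_ge1 : 1 <= b.
Hypothesis Psi_dec : decomposes O b Psi.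

Lemma gate_decomposes f : O f \/ f = Psi -> decomposes O (b ^+ `[< f = Psi >]) f.
Proof.
case: (pselect (O f)) => [fO _ | fNO [//| fPsi]].
  by apply: decomposes_le (decomposes_free fO); exact: exprn_ege1.
by rewrite fPsi asboolT // expr1.
Qed.

Lemma circuit_decomposes f s :
  all (fun g => `[< O g \/ g = Psi >]) (f :: s) ->
  decomposes O (b ^+ count (fun g => `[< g = Psi >]) (f :: s))
    (compose_list (f :: s)).
Proof.
elim: s f => [|g s IH] f /andP[/asboolP gate_f gates].
  by rewrite /= addn0; exact: gate_decomposes.
rewrite [count _ _]/= exprD; apply: decomposes_comp => //.
  exact: gate_decomposes.
exact: IH.
Qed.

Lemma Ok_decomposes k Phi : Ok O Psi k Phi -> decomposes O (b ^+ k) Phi.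
Proof.
case=> [[|f s] [//= _ gates count_k ->]].
by apply: decomposes_le (circuit_decomposes gates); exact: ler_weXn2l.
Qed.

End Circuits.

Lemma mul_le_split (R : realFieldType) (c x a b : R) : x <= a -> - x <= b ->
  c * x <= (`|c| + c) / 2 * a + (`|c| - c) / 2 * b.
Proof.
move=> xa xb; have [c_ge0|c_lt0] := lerP 0 c.
  rewrite ger0_norm // subrr !mul0r addr0.
  have -> : (c + c) / 2 = c by field.
  exact: ler_wpM2l.
rewrite ltr0_norm // addNr !mul0r add0r.
have -> : (- c - c) / 2 = - c by field.
by rewrite -mulrNN ler_wpM2l // oppr_ge0 ltW.
Qed.

Section EmpiricalRademacher.
Context {R : realType} {n : nat}.
Local Notation LM := (LinMap R n).
Local Notation Z := (Bits n * Bits n)%type.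
Local Notation signs m := {ffun 'I_m -> bool}.
Variables (O : set LM) (m : nat) (S : 'I_m -> Z).
Hypothesis O_nonempty : O !=set0.
Hypothesis chO : forall Phi, O Phi -> is_channel Phi.
Implicit Types (eps : signs m) (Phi : LM) (g : Z -> R).

Definition corr eps g : R := (m%:R)^-1 * \sum_(i < m) rsign R (eps i) * g (S i).

Definition flip eps : signs m := [ffun i => ~~ eps i].

(* Best correlation achieved by a free map (a real number, by sup_corrE). *)
Definition sup_corr eps : R :=
  fine (ereal_sup [set (corr eps g)%:E | g in Fset O]).

Definition avg_sup_corr : R :=
  ((2 ^ m)%:R)^-1 * \sum_(eps : signs m) sup_corr eps.

Lemma flipK : involutive flip.
Proof. by move=> eps; apply/ffunP => i; rewrite !ffunE negbK. Qed.

Lemma corr_flip eps g : corr (flip eps) g = - corr eps g.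
Proof.
rewrite /corr -mulrN -sumrN; congr (_ * _); apply: eq_bigr => i _.
by rewrite ffunE; case: (eps i); rewrite /rsign /= ?mulN1r ?mulNr ?mul1r ?opprK.
Qed.

(* Correlations of channels are bounded by 1, since f_Phi takes values in [0, 1]. *)
Lemma corr_bound eps Phi : is_channel Phi -> `|corr eps (fPhi Phi)| <= 1.
Proof.
move=> chPhi; rewrite /corr normrM normfV normr_nat.
have [m0|m_gt0] := posnP m; first by rewrite [X in X%:R]m0 invr0 mul0r.
rewrite ler_pdivrMl ?ltr0n // mulr1.
apply: le_trans (ler_norm_sum _ _ _) _.
have -> : (m%:R : R) = \sum_(i < m) 1 by rewrite sumr_const card_ord.
apply: ler_sum => i _.
have /andP[f_ge0 f_le1] := fPhi_bound (S i) chPhi.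
by rewrite normrM (ger0_norm f_ge0); case: (eps i); rewrite /rsign ?normrN normr1 mul1r.
Qed.

(* The supremum is finite: O is nonempty and correlations lie in [-1, 1]. *)
Lemma sup_corrE eps :
  ereal_sup [set (corr eps g)%:E | g in Fset O] = (sup_corr eps)%:E.
Proof.
rewrite /sup_corr fineK //; have [Phi0 Phi0O] := O_nonempty.
apply: fin_real; apply/andP; split.
  apply: lt_le_trans (ltNyr (corr eps (fPhi Phi0))) _.
  by apply: ereal_sup_ubound; exists (fPhi Phi0) => //; exists Phi0.
apply: le_lt_trans (ltry 1); apply: ge_ereal_sup => _ [_ [Phi PhiO <-] <-].
by rewrite lee_fin; have := corr_bound eps (chO PhiO); rewrite ler_norml => /andP[].
Qed.

Lemma corr_le_sup eps Phi : O Phi -> corr eps (fPhi Phi) <= sup_corr eps.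
Proof.
move=> PhiO; rewrite -lee_fin -sup_corrE.
by apply: ereal_sup_ubound; exists (fPhi Phi) => //; exists Phi.
Qed.

(* Correlation is odd in eps, so the two sups of eps and -eps add up to >= 0. *)
Lemma sup_corr_flip_ge0 eps : 0 <= sup_corr eps + sup_corr (flip eps).
Proof.
have [Phi0 Phi0O] := O_nonempty.
have := corr_le_sup eps Phi0O; have := corr_le_sup (flip eps) Phi0O.
by rewrite corr_flip; lra.
Qed.

Lemma corr_qsum eps t :
  corr eps (fPhi (qsum t)) = \sum_(p <- t) p.1 * corr eps (fPhi p.2).
Proof.
rewrite /corr; under eq_bigr do rewrite fPhi_qsum mulr_sumr.
rewrite exchange_big /= mulr_sumr; apply: eq_bigr => p _.
by rewrite !mulr_sumr; apply: eq_bigr => i _; ring.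
Qed.

Lemma corr_qsum_le eps t : qover O t ->
  corr eps (fPhi (qsum t)) <= (qnorm t + qweight t) / 2 * sup_corr eps
                             + (qnorm t - qweight t) / 2 * sup_corr (flip eps).
Proof.
rewrite corr_qsum /qnorm /qweight; elim: t => [|p t IH] /=.
  by rewrite !big_nil addr0 subrr !mul0r addr0.
case/andP=> /asboolP pO /IH {}IH; rewrite !big_cons.
have flip_le : - corr eps (fPhi p.2) <= sup_corr (flip eps).
  by rewrite -corr_flip corr_le_sup.
have head_le := mul_le_split p.1 (corr_le_sup eps pO) flip_le.
apply: le_trans (lerD head_le IH) _.
by rewrite le_eqVlt; apply/orP; left; apply/eqP; ring.
Qed.

Lemma corr_decomposes_le eps b Phi : decomposes O b Phi ->
  corr eps (fPhi Phi) <= (b + 1) / 2 * sup_corr eps + (b - 1) / 2 * sup_corr (flip eps).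
Proof.
case=> t [tO -> tw tn]; apply: le_trans (corr_qsum_le eps tO) _; rewrite tw.
(* raising the norm from r to b adds (b - r) / 2 * (sup(eps) + sup(-eps)) >= 0 *)
have := sup_corr_flip_ge0 eps.
set a := sup_corr eps; set a' := sup_corr (flip eps); set r := qnorm t => aa'.
have : 0 <= (b - r) / 2 * (a + a') by rewrite mulr_ge0 // divr_ge0 ?subr_ge0.
nra.
Qed.

Lemma sum_sup_corr_flip :
  \sum_(eps : signs m) sup_corr (flip eps) = \sum_(eps : signs m) sup_corr eps.
Proof. by rewrite [RHS](reindex_inj (can_inj flipK)). Qed.

Lemma avg_sup_corr_ge0 : 0 <= avg_sup_corr.
Proof.
rewrite /avg_sup_corr mulr_ge0 ?invr_ge0 //.
have : 0 <= \sum_(eps : signs m) (sup_corr eps + sup_corr (flip eps)).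
  by apply: sumr_ge0 => eps _; exact: sup_corr_flip_ge0.
by rewrite big_split /= sum_sup_corr_flip; lra.
Qed.

Lemma emp_rademacher_free : emp_rademacher S (Fset O) = avg_sup_corr%:E.
Proof.
rewrite /emp_rademacher /avg_sup_corr mulr_sumr -sumEFin.
by apply: eq_bigr => eps _; rewrite sup_corrE.
Qed.

(* Averaging the key estimate over eps, the flip symmetry turns
   ((b + 1) E + (b - 1) E) / 2 into b E. *)
Lemma emp_rademacher_decomposes (Q : set LM) b :
  (forall Phi, Q Phi -> decomposes O b Phi) ->
  (emp_rademacher S (Fset Q) <= (b * avg_sup_corr)%:E)%E.
Proof.
move=> Q_dec; apply: (@le_trans _ _ (\sum_(eps : signs m) (((2 ^ m)%:R)^-1 *
    ((b + 1) / 2 * sup_corr eps + (b - 1) / 2 * sup_corr (flip eps)))%:E)).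
  apply: lee_sum => eps _; rewrite EFinM lee_wpmul2l ?lee_fin ?invr_ge0 //.
  apply: ge_ereal_sup => _ [_ [Phi PhiQ <-] <-].
  by rewrite lee_fin; exact: corr_decomposes_le _ (Q_dec _ PhiQ).
rewrite sumEFin lee_fin /avg_sup_corr; set E := \sum_(eps : signs m) sup_corr eps.
have -> : \sum_(eps : signs m) ((2 ^ m)%:R^-1 *
    ((b + 1) / 2 * sup_corr eps + (b - 1) / 2 * sup_corr (flip eps))) =
    (2 ^ m)%:R^-1 * ((b + 1) / 2 * E + (b - 1) / 2 * E).
  by rewrite -mulr_sumr big_split -!mulr_sumr sum_sup_corr_flip.
by rewrite le_eqVlt; apply/orP; left; apply/eqP; field.
Qed.

End EmpiricalRademacher.

Lemma rademacher_le (R : realType) (T : finType) (D : T -> R) (m : nat)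
    (G H : set (T -> R)) (b : \bar R) :
  is_distribution D ->
  (forall S : {ffun 'I_m -> T}, 0 <= emp_rademacher S H)%E ->
  (forall S : {ffun 'I_m -> T}, emp_rademacher S G <= b * emp_rademacher S H)%E ->
  (rademacher D m G <= b * rademacher D m H)%E.
Proof.
move=> [D_ge0 _] H_ge0 GH; have DS_ge0 S : 0 <= \prod_(i < m) D (S i).
  exact: prodr_ge0.
rewrite /rademacher ge0_sume_distrr => [|S _]; last by rewrite mule_ge0 ?lee_fin.
apply: lee_sum => S _; rewrite muleCA.
by apply: lee_wpmul2l; rewrite ?lee_fin.
Qed.

Lemma expr_add_le (R : realFieldType) (c d : R) (k : nat) : 0 <= c -> 0 <= d ->
  (c + d) ^+ k <= c ^+ k + d * (k%:R * (c + d) ^+ k.-1).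
Proof.
move=> c_ge0 d_ge0; rewrite -lerBlDl subrXX addrAC subrr add0r.
rewrite ler_wpM2l // -[k in k%:R]card_ord -sum1_card natr_sum mulr_suml.
apply: ler_sum => i _; rewrite mul1r.
have -> : (c + d) ^+ k.-1 = (c + d) ^+ (k.-1 - i) * (c + d) ^+ i.
  by rewrite -exprD subnK // -ltnS prednK ?ltn_ord // (leq_ltn_trans _ (ltn_ord i)).
by rewrite ler_wpM2l ?exprn_ge0 ?addr_ge0 // lerXn2r ?nnegrE ?addr_ge0 ?lerDl.
Qed.

Lemma le_approx (R : realType) (x : \bar R) (y K : R) : 0 <= K ->
  (forall d, 0 < d -> d <= 1 -> (x <= (y + d * K)%:E)%E) -> (x <= y%:E)%E.
Proof.
move=> K_ge0 xle; apply/lee_addgt0Pr => e e_gt0.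
have K1_gt0 : 0 < K + 1 by lra.
set d := Num.min 1 (e / (K + 1)).
have d_gt0 : 0 < d by rewrite lt_min ltr01 divr_gt0.
have d_le1 : d <= 1 by rewrite ge_min lexx.
apply: le_trans (xle d d_gt0 d_le1) _; rewrite -EFinD lee_fin lerD2l.
apply: le_trans (_ : e / (K + 1) * K <= e).
  by rewrite ler_wpM2r // ge_min lexx orbT.
by rewrite mulrAC ler_pdivrMr // ler_wpM2l ?(ltW e_gt0) //; lra.
Qed.

Section Bounds.
Context {R : realType} {n : nat}.
Local Notation LM := (LinMap R n).
Variables (O : set LM) (Psi : LM) (k : nat).
Hypothesis O_nonempty : O !=set0.
Hypothesis chO : forall Phi, O Phi -> is_channel Phi.
Hypothesis compO : forall Phi Phi', O Phi -> O Phi' -> O (Phi \o Phi').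
Hypothesis chPsi : is_channel Psi.
Hypothesis Psi_fin : (robustness O Psi < +oo)%E.

Let linO Phi (PhiO : O Phi) : is_linear_map Phi :=
  let: And3 linPhi _ _ := chO PhiO in linPhi.

Let gam := fine (robustness O Psi).

Lemma robustness_PsiE : robustness O Psi = gam%:E.
Proof.
rewrite /gam fineK // ge0_fin_numE ?Psi_fin //; exact: robustness_ge0.
Qed.

Lemma gamma_max_ge0 : (0 <= gamma_max O)%E.
Proof.
apply: le_trans (robustness_ge0 O Psi) _.
by apply: ereal_sup_ubound; exists Psi.
Qed.

Lemma emp_bound_decomposes (c : R) m (S : 'I_m -> Bits n * Bits n) :
  1 <= c -> (forall d, 0 < d -> decomposes O (c + d) Psi) ->
  (emp_rademacher S (Fset (Ok O Psi k)) <= (c ^+ k * avg_sup_corr O S)%:E)%E.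
Proof.
move=> c_ge1 Psi_dec; have E_ge0 := avg_sup_corr_ge0 S O_nonempty chO.
apply: (@le_approx _ _ _ (k%:R * (c + 1) ^+ k.-1 * avg_sup_corr O S)).
  by rewrite mulr_ge0 // mulr_ge0 ?ler0n // exprn_ge0 //; lra.
move=> d d_gt0 d_le1.
have Ok_dec := Ok_decomposes linO compO _ (Psi_dec d d_gt0).
apply: le_trans (emp_rademacher_decomposes S O_nonempty chO (Ok_dec _ _)) _.
  by lra.
rewrite lee_fin (mulrA d) -mulrDl ler_wpM2r //.
apply: le_trans (expr_add_le k _ _) _; [lra | lra |].
rewrite lerD2l ler_wpM2l ?(ltW d_gt0) // ler_wpM2l // lerXn2r ?nnegrE; lra.
Qed.

Lemma emp_bound_robustness m (S : 'I_m -> Bits n * Bits n) :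
  (emp_rademacher S (Fset (Ok O Psi k)) <=
     ((1 + 2 * gam) ^+ k * avg_sup_corr O S)%:E)%E.
Proof.
have gam_ge0 : 0 <= gam by rewrite -lee_fin -robustness_PsiE robustness_ge0.
apply: emp_bound_decomposes => [|d d_gt0]; first lra.
have -> : 1 + 2 * gam + d = 1 + 2 * (gam + d / 2) by field.
by apply: robustness_decomposes; rewrite robustness_PsiE lte_fin; lra.
Qed.

(* Bound through the decomposition of each circuit: every element of
   O^(k)_Psi is a channel, hence has robustness at most gamma_max. *)
Lemma emp_bound_gamma_max g m (S : 'I_m -> Bits n * Bits n) :
  gamma_max O = g%:E ->
  (emp_rademacher S (Fset (Ok O Psi k)) <= ((1 + 2 * g) * avg_sup_corr O S)%:E)%E.
Proof.
move=> gE; have E_ge0 := avg_sup_corr_ge0 S O_nonempty chO.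
apply: (@le_approx _ _ _ (2 * avg_sup_corr O S)); first by rewrite mulr_ge0.
move=> d d_gt0 d_le1.
apply: le_trans (_ : _ <= ((1 + 2 * (g + d)) * avg_sup_corr O S)%:E)%E _; last first.
  by rewrite lee_fin le_eqVlt; apply/orP; left; apply/eqP; ring.
apply: emp_rademacher_decomposes => // Phi PhiOk.
apply: robustness_decomposes; apply: (@le_lt_trans _ _ (gamma_max O)).
  by apply: ereal_sup_ubound; exists Phi => //; exact: Ok_channel PhiOk.
by rewrite gE lte_fin ltrDl.
Qed.

(* gamma_star is the smaller of the two bounds; when gamma_max = +oo it is
   (1 + 2 gamma(Psi))^k. *)
Lemma emp_bound m (S : 'I_m -> Bits n * Bits n) :
  (emp_rademacher S (Fset (Ok O Psi k)) <=
     gamma_star O Psi k * emp_rademacher S (Fset O))%E.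
Proof.
rewrite (emp_rademacher_free S O_nonempty chO) /gamma_star -/gam.
have := gamma_max_ge0; case gE: (gamma_max O) => [g| |] // _.
  rewrite minEle; case: ifP => _; rewrite -EFinM.
    exact: emp_bound_gamma_max.
  exact: emp_bound_robustness.
rewrite mulry gtr0_sg // mul1e addey // min_r ?leey // -EFinM.
exact: emp_bound_robustness.
Qed.

End Bounds.

Theorem theorem2 (R : realType) (n : nat) (O : set (LinMap R n))
  (Psi : LinMap R n) (k : nat) :
  O !=set0 ->
  (forall Phi, O Phi -> is_channel Phi) ->
  (forall Phi Phi', O Phi -> O Phi' -> O (Phi \o Phi')) ->
  is_channel Psi ->
  (robustness O Psi < +oo)%E ->
  (forall (m : nat) (S : 'I_m -> Bits n * Bits n),
     (emp_rademacher S (Fset (Ok O Psi k))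
        <= gamma_star O Psi k * emp_rademacher S (Fset O))%E) /\
  (forall (D : Bits n * Bits n -> R) (m : nat),
     is_distribution D ->
     (rademacher D m (Fset (Ok O Psi k))
        <= gamma_star O Psi k * rademacher D m (Fset O))%E).
Proof.
move=> O_nonempty chO compO chPsi Psi_fin.
have emp_Ok := emp_bound k O_nonempty chO compO chPsi Psi_fin.
split=> [|D m D_distr]; first exact: emp_Ok.
apply: (rademacher_le D_distr _ (emp_Ok m)) => S.
by rewrite (emp_rademacher_free S O_nonempty chO) lee_fin avg_sup_corr_ge0.
Qed.
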